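(* Let $\rho\in(0,1)\cup(1,\infty)$, $\xi\in\mathbb{R}$, and $H=\frac{1}{2(1+\rho\sinh^2\chi)}\big(\cosh^2\chi P_\chi^2+\frac{P_\phi^2}{\tanh^2\chi}+\xi\sinh^2\chi\big)$ on $(\chi,\phi)\in(0,\infty)\times\mathbb{S}^1$. Suppose the level set $H=E$, $P_\phi=L>0$ is nonempty, and set $\sigma=2(\rho-1)E-\xi$. Then $\sigma\le0\Rightarrow E>0$, and $\xi-2\rho E\ge0\Rightarrow E>0$. *)

From Stdlib Require Import Reals.
Open Scope R_scope.

(* The Hamiltonian H(chi, phi, P_chi, P_phi); it does not depend on phi
   (phi in S^1 is represented by a real angle). *)
Definition Ham (rho xi : R) (chi phi Pchi Pphi : R) : R :=
  / (2 * (1 + rho * (sinh chi) ^ 2)) *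
  ((cosh chi) ^ 2 * Pchi ^ 2 + Pphi ^ 2 / (tanh chi) ^ 2 + xi * (sinh chi) ^ 2).

(* Clearing the denominator of H turns the level set into
   2E(1 + rho s) = A + xi s, with s = sinh^2 chi > 0 and A > 0 the kinetic
   part (positive since L > 0).  Under sigma <= 0 the right-hand side is at
   least A + 2(rho - 1)E s, giving 2E(1 + s) >= A; under xi >= 2 rho E it is
   at least A + 2 rho E s, giving 2E >= A. *)

From Stdlib Require Import Reals Lra Psatz.
Open Scope R_scope.

Lemma sinh_pos (x : R) : 0 < x -> 0 < sinh x.
Proof. intro hx; rewrite <- sinh_0; exact (sinh_lt 0 x hx). Qed.

Lemma cosh_pos (x : R) : 0 < cosh x.
Proof.
  unfold cosh; pose proof (exp_pos x); pose proof (exp_pos (- x)); lra.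
Qed.

Lemma tanh_pos (x : R) : 0 < x -> 0 < tanh x.
Proof.
  intro hx; unfold tanh.
  apply Rdiv_lt_0_compat; [apply sinh_pos, hx | apply cosh_pos].
Qed.

Definition kinetic (chi Pchi Pphi : R) : R :=
  (cosh chi) ^ 2 * Pchi ^ 2 + Pphi ^ 2 / (tanh chi) ^ 2.

Lemma kinetic_pos (chi Pchi Pphi : R) :
  0 < chi -> Pphi <> 0 -> 0 < kinetic chi Pchi Pphi.
Proof.
  intros hchi hP; unfold kinetic.
  pose proof (tanh_pos chi hchi) as ht.
  assert (0 < Pphi ^ 2 / tanh chi ^ 2).
  { apply Rdiv_lt_0_compat; [| apply pow_lt, ht].
    pose proof (Rsqr_pos_lt Pphi hP); unfold Rsqr in *; nra. }
  assert (0 <= cosh chi ^ 2 * Pchi ^ 2) by nra.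
  lra.
Qed.

Lemma Ham_mul_denominator (rho xi chi phi Pchi Pphi : R) :
  1 + rho * (sinh chi) ^ 2 <> 0 ->
  Ham rho xi chi phi Pchi Pphi * (2 * (1 + rho * (sinh chi) ^ 2)) =
  kinetic chi Pchi Pphi + xi * (sinh chi) ^ 2.
Proof.
  intro hD; unfold Ham, kinetic.
  rewrite Rmult_comm, <- Rmult_assoc, Rinv_r; [ring | lra].
Qed.

Section LevelSetSign.

Variables rho xi E A s : R.
Hypotheses (hA : 0 < A) (hs : 0 < s)
  (hlevel : E * (2 * (1 + rho * s)) = A + xi * s).

Lemma level_pos_of_sigma_nonpos : 2 * (rho - 1) * E - xi <= 0 -> 0 < E.
Proof. intro h; nra. Qed.

Lemma level_pos_of_xi_ge : xi - 2 * rho * E >= 0 -> 0 < E.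
Proof. intro h; nra. Qed.

End LevelSetSign.

Theorem lemma11 (rho xi E L : R)
  (hrho : 0 < rho) (hrho1 : rho <> 1) (hL : 0 < L)
  (hne : exists chi phi Pchi : R, 0 < chi /\ Ham rho xi chi phi Pchi L = E) :
  (2 * (rho - 1) * E - xi <= 0 -> 0 < E) /\ (xi - 2 * rho * E >= 0 -> 0 < E).
Proof.
  destruct hne as [chi [phi [Pchi [hchi hE]]]].
  assert (hs : 0 < sinh chi ^ 2) by (apply pow_lt, sinh_pos, hchi).
  assert (hA : 0 < kinetic chi Pchi L) by (apply kinetic_pos; lra).
  assert (hD : 1 + rho * sinh chi ^ 2 <> 0) by nra.
  pose proof (Ham_mul_denominator rho xi chi phi Pchi L hD) as hlevel.
  rewrite hE in hlevel.
  split.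
  - exact (level_pos_of_sigma_nonpos _ _ _ _ _ hA hs hlevel).
  - exact (level_pos_of_xi_ge _ _ _ _ _ hA hs hlevel).
Qed.
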